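(* Let $p,q>0$ and $\alpha,\beta,\nu,\gamma\in\mathbb{R}$ with $\nu\ln p\neq\alpha\ln q$ (equivalently $p^\nu\neq q^\alpha$). Define for $n\in\mathbb{N}$ $$f(n)=q^{\beta}\left(\frac{p^{n\nu}-q^{n\alpha}}{p^{\nu}-q^{\alpha}}+2\gamma\,\frac{p^{n\nu}-(-1)^{n}q^{n\alpha}}{p^{\nu}+q^{\alpha}}\right).$$ Then $f(n)>0$ for all integers $n\geq 1$ provided that $-2\gamma<1$ in the case $\nu\ln p>\alpha\ln q$, and $-1<2\gamma<-\dfrac{p^{\nu}+q^{\alpha}}{p^{\nu}-q^{\alpha}}$ in the case $\nu\ln p<\alpha\ln q$.
   Context: $f$ is the structure function of the $(p,q;\alpha,\beta,\nu;\gamma)$-deformed oscillator algebra (defined by $aa^{\dagger}-p^{\nu}a^{\dagger}a=(1+2\gamma K)q^{\alpha N+\beta}$, $[N,a]=-a$, $[N,a^\dagger]=a^\dagger$, $Ka=-aK$, $Ka^\dagger=-a^\dagger K$, $[N,K]=0$) in the case $p^\nu\neq q^\alpha$; note $f(0)=0$. *)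

From Stdlib Require Import Reals.
Open Scope R_scope.

Definition structf (p q alpha beta nu gamma : R) (n : nat) : R :=
  Rpower q beta *
  ( (Rpower p (INR n * nu) - Rpower q (INR n * alpha))
      / (Rpower p nu - Rpower q alpha)
  + 2 * gamma * (Rpower p (INR n * nu) - (-1) ^ n * Rpower q (INR n * alpha))
      / (Rpower p nu + Rpower q alpha) ).

(* With a = p^nu and b = q^alpha, f(n) is q^beta times [n]_{a,b} + 2 gamma [n]_{a,-b}, where
   [n]_{x,y} = (x^n - y^n)/(x - y).  For even n the twisted quotient is the fraction
   (a - b)/(a + b) of the plain one, so f(n) > 0 reduces to 1 + 2 gamma (a - b)/(a + b) > 0,
   which is exactly the hypothesis in either ordering of a and b.  For odd n the twisted
   quotient is positive and bounded by the plain one, so 2 gamma > -1 suffices. *)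

From Stdlib Require Import Reals Lra Psatz.
Open Scope R_scope.

Definition pow_quot (x y : R) (n : nat) : R := (x ^ n - y ^ n) / (x - y).

Lemma pow_lt_compat_l (x y : R) (n : nat) :
  0 <= x < y -> (0 < n)%nat -> x ^ n < y ^ n.
Proof.
  intros [Hx Hxy] Hn.
  destruct n as [|n]; [lia|]; clear Hn.
  induction n as [|n IH]; [simpl; lra|].
  change (x * x ^ S n < y * y ^ S n).
  assert (0 <= x ^ S n) by (apply pow_le; lra).
  nra.
Qed.

Lemma pow_opp_even (x : R) (m : nat) : (- x) ^ (2 * m) = x ^ (2 * m).
Proof. rewrite !pow_mult. f_equal. ring. Qed.

Lemma pow_opp_odd (x : R) (m : nat) : (- x) ^ S (2 * m) = - x ^ S (2 * m).
Proof. rewrite <- !tech_pow_Rmult, pow_opp_even. ring. Qed.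

Lemma pow_quot_sym (x y : R) (n : nat) : x <> y -> pow_quot x y n = pow_quot y x n.
Proof. intros Hxy. unfold pow_quot. field. lra. Qed.

Lemma pow_quot_pos (a b : R) (n : nat) :
  0 <= a -> 0 <= b -> a <> b -> (0 < n)%nat -> 0 < pow_quot a b n.
Proof.
  intros Ha Hb Hab Hn.
  destruct (Rtotal_order a b) as [Hlt|[Heq|Hgt]]; [|contradiction|].
  - rewrite pow_quot_sym by lra. unfold pow_quot.
    apply Rdiv_lt_0_compat; [|lra].
    assert (a ^ n < b ^ n) by (apply pow_lt_compat_l; [lra | exact Hn]). lra.
  - unfold pow_quot. apply Rdiv_lt_0_compat; [|lra].
    assert (b ^ n < a ^ n) by (apply pow_lt_compat_l; [lra | exact Hn]). lra.
Qed.

Lemma pow_quot_nonneg (a b : R) (n : nat) :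
  0 <= a -> 0 <= b -> a <> b -> 0 <= pow_quot a b n.
Proof.
  intros Ha Hb Hab. destruct n as [|n].
  - unfold pow_quot. simpl. unfold Rdiv. lra.
  - apply Rlt_le, pow_quot_pos; auto; lia.
Qed.

Lemma pow_quot_opp_even (a b : R) (m : nat) :
  a <> b -> a + b <> 0 ->
  pow_quot a (- b) (2 * m) = (a - b) / (a + b) * pow_quot a b (2 * m).
Proof.
  intros Hab Hab'. unfold pow_quot. rewrite pow_opp_even. field. lra.
Qed.

Lemma pow_quot_sub_opp_odd (a b : R) (m : nat) :
  a <> b -> a + b <> 0 ->
  pow_quot a b (S (2 * m)) - pow_quot a (- b) (S (2 * m))
  = 2 * a * b / (a + b) * pow_quot a b (2 * m).
Proof.
  intros Hab Hab'. unfold pow_quot. rewrite pow_opp_odd, <- !tech_pow_Rmult. field. lra.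
Qed.

Lemma pow_quot_opp_odd_pos (a b : R) (m : nat) :
  0 < a -> 0 < b -> 0 < pow_quot a (- b) (S (2 * m)).
Proof.
  intros Ha Hb. unfold pow_quot. rewrite pow_opp_odd.
  apply Rdiv_lt_0_compat; [|lra].
  assert (0 < a ^ S (2 * m)) by (apply pow_lt; lra).
  assert (0 < b ^ S (2 * m)) by (apply pow_lt; lra).
  lra.
Qed.

Lemma one_add_mul_ratio_pos (a b c : R) :
  0 < a -> 0 < b ->
  (b < a -> - c < 1) ->
  (a < b -> -1 < c /\ c < - ((a + b) / (a - b))) ->
  0 < 1 + c * ((a - b) / (a + b)).
Proof.
  intros Ha Hb Hgt Hlt.
  assert (Hratio : 1 + c * ((a - b) / (a + b)) = ((a + b) + c * (a - b)) / (a + b))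
    by (field; lra).
  rewrite Hratio. apply Rdiv_lt_0_compat; [|lra].
  destruct (Rtotal_order a b) as [H|[H|H]].
  - destruct (Hlt H) as [_ Hc].
    assert (Hc' : - ((a + b) / (a - b)) * (a - b) = - (a + b)) by (field; lra).
    nra.
  - subst. lra.
  - specialize (Hgt H). nra.
Qed.

Lemma pow_quot_add_mul_opp_pos (a b c : R) (n : nat) :
  0 < a -> 0 < b -> a <> b ->
  (b < a -> - c < 1) ->
  (a < b -> -1 < c /\ c < - ((a + b) / (a - b))) ->
  (1 <= n)%nat ->
  0 < pow_quot a b n + c * pow_quot a (- b) n.
Proof.
  intros Ha Hb Hab Hgt Hlt Hn.
  destruct (Nat.Even_or_Odd n) as [[m ->]|[m ->]].
  - rewrite pow_quot_opp_even by lra.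
    replace (pow_quot a b (2 * m) + c * ((a - b) / (a + b) * pow_quot a b (2 * m)))
      with (pow_quot a b (2 * m) * (1 + c * ((a - b) / (a + b)))) by ring.
    apply Rmult_lt_0_compat.
    + apply pow_quot_pos; lra || lia.
    + apply one_add_mul_ratio_pos; auto.
  - replace (2 * m + 1)%nat with (S (2 * m)) by lia.
    assert (Hc : -1 < c).
    { destruct (Rtotal_order a b) as [H|[H|H]].
      - apply (Hlt H).
      - contradiction.
      - specialize (Hgt H). lra. }
    assert (Hpos := pow_quot_opp_odd_pos a b m Ha Hb).
    assert (Hgap : 0 <= pow_quot a b (S (2 * m)) - pow_quot a (- b) (S (2 * m))).
    { rewrite pow_quot_sub_opp_odd by lra.
      apply Rmult_le_pos; [|apply pow_quot_nonneg; lra].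
      apply Rlt_le, Rdiv_lt_0_compat; nra. }
    nra.
Qed.

Lemma Rpower_lt_iff (x y u v : R) : Rpower x u < Rpower y v <-> u * ln x < v * ln y.
Proof. split; [apply exp_lt_inv | apply exp_increasing]. Qed.

Lemma structf_pow_quot (p q alpha beta nu gamma : R) (n : nat) :
  0 < p -> 0 < q -> Rpower p nu <> Rpower q alpha ->
  structf p q alpha beta nu gamma n
  = Rpower q beta * (pow_quot (Rpower p nu) (Rpower q alpha) n
                     + 2 * gamma * pow_quot (Rpower p nu) (- Rpower q alpha) n).
Proof.
  intros Hp Hq Hab. unfold structf, pow_quot.
  assert (Hpow : forall x y, 0 < x -> Rpower x (INR n * y) = Rpower x y ^ n).
  { intros x y Hx. rewrite Rmult_comm, <- Rpower_mult. apply Rpower_pow, exp_pos. }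
  rewrite (Hpow p nu Hp), (Hpow q alpha Hq).
  replace (- Rpower q alpha) with (-1 * Rpower q alpha) by ring.
  rewrite Rpow_mult_distr.
  assert (0 < Rpower p nu) by apply exp_pos.
  assert (0 < Rpower q alpha) by apply exp_pos.
  field. lra.
Qed.

Theorem proposition2 (p q alpha beta nu gamma : R) :
  0 < p -> 0 < q ->
  nu * ln p <> alpha * ln q ->
  (alpha * ln q < nu * ln p -> - (2 * gamma) < 1) ->
  (nu * ln p < alpha * ln q ->
     -1 < 2 * gamma /\
     2 * gamma < - ((Rpower p nu + Rpower q alpha) / (Rpower p nu - Rpower q alpha))) ->
  forall n : nat, (1 <= n)%nat -> 0 < structf p q alpha beta nu gamma n.
Proof.
  intros Hp Hq Hne Hgt Hlt n Hn.
  assert (Hab : Rpower p nu <> Rpower q alpha).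
  { intros E. apply Hne, exp_inv, E. }
  rewrite structf_pow_quot by assumption.
  apply Rmult_lt_0_compat; [apply exp_pos|].
  apply pow_quot_add_mul_opp_pos; try apply exp_pos; auto.
  - intros H. apply Hgt, Rpower_lt_iff, H.
  - intros H. apply Hlt, Rpower_lt_iff, H.
Qed.
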